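(* Let $k\in\mathbb N$, $E\subseteq W(A)$ and $\vec s\in V^\infty(A)$ such that $E$ is $k$-large in $\vec s$. Let $r\ge2$ and $E=\bigcup_{i=1}^r E_i$. Then there exist $1\le i\le r$ and $\vec t\in V^\infty(A)$ with $\vec t\le_k\vec s$ such that $E_i$ is $k$-large in $\vec t$.
   Context: $\mathbb N=\{0,1,2,\dots\}$. Fix an increasing sequence $A_0\subseteq A_1\subseteq A_2\subseteq\cdots$ of finite nonempty alphabets and set $A=\bigcup_{n\in\mathbb N}A_n$. $W(A)$ denotes the set of all finite words over $A$, including the empty word; words are concatenated by juxtaposition. Fix a symbol $x\notin A$. A variable word over $A$ is a finite word over $A\cup\{x\}$ in which $x$ occurs at least once; $V(A)$ is the set of variable words. For $s(x)\in V(A)$ and $a\in A\cup\{x\}$, $s(a)$ is obtained by replacing every occurrence of $x$ by $a$. $V^\infty(A)$ is the set of infinite sequences of variable words. For a sequence $(s_n(x))_{n\in I}$ of variable words and a sequence $(B_n)_{n\in I}$ of finite subsets of $A$, both indexed by a set $I\subseteq\mathbb N$ that is either a finite interval or of the form $\{m,m+1,\dots\}$: the constant span $\langle (s_n(x))_{n\in I}\,\|\,(B_n)_{n\in I}\rangle_c$ is the set of all words $s_{l_0}(a_0)s_{l_1}(a_1)\cdots s_{l_j}(a_j)$ with $j\ge0$, $l_0<\dots<l_j$ in $I$ and $a_i\in B_{l_i}$ for each $i$; the variable span $\langle (s_n(x))_{n\in I}\,\|\,(B_n)_{n\in I}\rangle_v$ is the set of all words $s_{l_0}(a_0)\cdots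 s_{l_j}(a_j)$ with $j\ge0$, $l_0<\dots<l_j$ in $I$, $a_i\in B_{l_i}\cup\{x\}$ for each $i$, and at least one $a_i=x$. (E.g. $(A_{k+n})_{n=p}^{q}$ denotes the sequence $B_n=A_{k+n}$, $p\le n\le q$.) Extracted $k$-subsequences: let $k\in\mathbb N$ and $\vec s=(s_n(x))_{n=0}^\infty\in V^\infty(A)$. A finite sequence $(t_n(x))_{n=0}^l$ of variable words is an extracted $k$-subsequence of $\vec s$ if there exist integers $0=m_0<m_1<\dots<m_{l+1}$ with $t_i(x)\in\langle (s_n(x))_{n=m_i}^{m_{i+1}-1}\,\|\,(A_{k+n})_{n=m_i}^{m_{i+1}-1}\rangle_v$ for all $0\le i\le l$. An infinite sequence $\vec t=(t_n(x))_{n=0}^\infty$ is an extracted $k$-subsequence of $\vec s$ if each initial segment $(t_n(x))_{n=0}^l$ is a finite extracted $k$-subsequence of $\vec s$. We write $\vec t\le_k\vec s$. A set $E\subseteq W(A)$ is $k$-large in $\vec s\in V^\infty(A)$ if $E\cap\langle\vec w\,\|\,(A_{k+n})_{n=0}^\infty\rangle_c\neq\emptyset$ for every $\vec w\in V^\infty(A)$ with $\vec w\le_k\vec s$. *)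

From mathcomp Require Import all_boot.
Set Implicit Arguments. Unset Strict Implicit. Unset Printing Implicit Defensive.

(* Letters have type T; the variable x is encoded as [None] in [option T].
   An alphabet sequence is [A : nat -> seq T] (finite sets as lists). *)

Section Words.
Variable T : eqType.

Definition in_alph (A : nat -> seq T) (a : T) : Prop := exists n, a \in A n.

Definition is_word (A : nat -> seq T) (w : seq T) : Prop :=
  forall a, a \in w -> in_alph A a.

Definition is_vword (A : nat -> seq T) (s : seq (option T)) : Prop :=
  None \in s /\ forall a, Some a \in s -> in_alph A a.

Definition is_Vinf (A : nat -> seq T) (s : nat -> seq (option T)) : Prop :=
  forall n, is_vword A (s n).

Definition csubst (s : seq (option T)) (a : T) : seq T :=
  map (fun o => if o is Some b then b else a) s.

Definition vsubst (s : seq (option T)) (a : option T) : seq (option T) :=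
  map (fun o => if o is Some b then Some b else a) s.

(* constant span <(s_n)_{n in I} || (B_n)_{n in I}>_c :
   words s_{l0}(a0)...s_{lj}(aj), j >= 0, l0 < ... < lj in I, ai in B_{li} *)
Definition cspan (s : nat -> seq (option T)) (B : nat -> seq T) (I : pred nat)
    (w : seq T) : Prop :=
  exists ls : seq (nat * T),
    [/\ ls != [::], sorted ltn (map fst ls),
        all (fun p => I p.1) ls, all (fun p => p.2 \in B p.1) ls &
        w = flatten (map (fun p => csubst (s p.1) p.2) ls)].

Definition vspan (s : nat -> seq (option T)) (B : nat -> seq T) (I : pred nat)
    (w : seq (option T)) : Prop :=
  exists ls : seq (nat * option T),
    [/\ ls != [::], sorted ltn (map fst ls),
        all (fun p => I p.1) ls,
        all (fun p => if p.2 is Some a then a \in B p.1 else true) ls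
          && (None \in map snd ls) &
        w = flatten (map (fun p => vsubst (s p.1) p.2) ls)].

Definition extracted_fin (A : nat -> seq T) (k : nat)
    (s t : nat -> seq (option T)) (l : nat) : Prop :=
  exists m : nat -> nat,
    [/\ m 0 = 0,
        forall i, i <= l -> m i < m i.+1 &
        forall i, i <= l ->
          vspan s (fun n => A (k + n)) (fun n => m i <= n < m i.+1) (t i)].

Definition le_k (A : nat -> seq T) (k : nat) (t s : nat -> seq (option T)) : Prop :=
  forall l, extracted_fin A k s t l.

Definition k_large (A : nat -> seq T) (k : nat) (E : seq T -> Prop)
    (s : nat -> seq (option T)) : Prop :=
  forall w, is_Vinf A w -> le_k A k w s ->
    exists u, E u /\ cspan w (fun n => A (k + n)) (fun _ => true) u.

End Words.

(* Suppose no E_i is k-large in any t <=_k s.  Then for every such t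
   and every i there is t' <=_k t whose constant span misses E_i.  Starting
   from s and refining r times (once per E_i) we reach w <=_k s whose constant
   span misses every E_i, hence misses E -- contradicting k-largeness of E.

   The refinement step needs two structural facts about extraction:
   [le_k_trans] (<=_k is transitive) and [cspan_le_k] (t <=_k w implies
   <t>_c ⊆ <w>_c).  Both rest on [vword_expand]: a word of a span over the
   blocks t_0, ..., t_L of an extraction of s can be re-expanded as a word of a
   span over s itself, with the indices moved into the corresponding blocks. *)

From mathcomp Require Import all_boot.
From Stdlib Require Import Classical.
Set Implicit Arguments. Unset Strict Implicit. Unset Printing Implicit Defensive.

Section Substitution.
Variable T : eqType.
Implicit Types (u : seq (option T)) (s : nat -> seq (option T)).
Implicit Types (ls js : seq (nat * option T)) (cs : seq (nat * T)).

Definition vword s ls : seq (option T) :=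
  flatten (map (fun p => vsubst (s p.1) p.2) ls).

Definition cword s cs : seq T := flatten (map (fun p => csubst (s p.1) p.2) cs).

Lemma vword_cat s ls js : vword s (ls ++ js) = vword s ls ++ vword s js.
Proof. by rewrite /vword map_cat flatten_cat. Qed.

Lemma vsubst_vsubst u b a :
  vsubst (vsubst u b) a = vsubst u (if b is Some c then Some c else a).
Proof. by rewrite /vsubst -map_comp; apply: eq_map => -[c|] //=; case: b. Qed.

Lemma vsubst_Some u a : vsubst u (Some a) = map Some (csubst u a).
Proof. by rewrite /vsubst /csubst -map_comp; apply: eq_map => -[c|]. Qed.

Lemma vsubst_None u : vsubst u None = u.
Proof. by rewrite /vsubst -[RHS]map_id; apply: eq_map => -[c|]. Qed.

Definition fill (a : option T) js : seq (nat * option T) :=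
  map (fun p => (p.1, if p.2 is Some c then Some c else a)) js.

Lemma fill_fst a js : map fst (fill a js) = map fst js.
Proof. by rewrite -map_comp. Qed.

Lemma vword_fill s a js : vword s (fill a js) = vsubst (vword s js) a.
Proof.
rewrite /vword /vsubst map_flatten -!map_comp; congr flatten.
by apply: eq_map => p; exact: esym (vsubst_vsubst _ _ _).
Qed.

Lemma fill_None a js :
  None \in map snd js -> (None \in map snd (fill a js)) = (a == None).
Proof.
case: a => [c|] js_None /=.
  by apply/negbTE/mapP => -[q /mapP[p _ ->]] /=; case: p.2.
case/mapP: js_None => p p_in p_None; apply/mapP; exists (p.1, None) => //.
by apply/mapP; exists p => //; rewrite -p_None.
Qed.

Definition lift cs : seq (nat * option T) := map (fun p => (p.1, Some p.2)) cs.

Lemma vword_lift s cs : vword s (lift cs) = map Some (cword s cs).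
Proof.
rewrite /vword /cword map_flatten -!map_comp; congr flatten.
by apply: eq_map => p /=; rewrite vsubst_Some.
Qed.

Lemma liftP ls : None \notin map snd ls -> exists cs, ls = lift cs.
Proof.
elim: ls => [|[l [c|]] ls IH]; first by exists [::].
  by rewrite map_cons in_cons => /IH[cs ->]; exists ((l, c) :: cs).
by rewrite map_cons in_cons eqxx.
Qed.

End Substitution.

Section BlockIndices.
Variables (m : nat -> nat) (L : nat).
Hypothesis m_lt : forall i, i <= L -> m i < m i.+1.

Lemma block_mono i j : i <= j -> j <= L.+1 -> m i <= m j.
Proof.
elim: j => [|j IH]; first by rewrite leqn0 => /eqP ->.
rewrite leq_eqVlt => /orP[/eqP -> //|lt_ij] lt_jL.
exact: leq_trans (IH lt_ij (ltnW lt_jL)) (ltnW (m_lt lt_jL)).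
Qed.

Lemma block_ge : m 0 = 0 -> forall i, i <= L.+1 -> i <= m i.
Proof.
move=> m0; elim=> [|i IH] // lt_iL.
exact: leq_ltn_trans (IH (ltnW lt_iL)) (m_lt lt_iL).
Qed.

End BlockIndices.

Section Refinement.
Variables (T : eqType) (A : nat -> seq T) (k : nat).
Hypothesis A_inc : forall n, {subset A n <= A n.+1}.
Implicit Types (s t w : nat -> seq (option T)) (ls js : seq (nat * option T)).

Lemma A_mono a n n' : n <= n' -> a \in A n -> a \in A n'.
Proof.
move=> /subnK <-; elim: (n' - n) => [//|d IH] a_in.
by rewrite addSn; apply: A_inc; apply: IH.
Qed.

Definition letters_ok ls : bool :=
  all (fun p => if p.2 is Some a then a \in A (k + p.1) else true) ls.

Lemma letters_ok_fill (a : option T) l js :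
  letters_ok js -> (if a is Some c then c \in A (k + l) else true) ->
  all (fun p => l <= p.1) js -> letters_ok (fill a js).
Proof.
move=> /allP js_ok a_ok /allP js_ge; apply/allP => q /mapP[p p_in ->] /=.
case p2: p.2 => [c|]; first by have := js_ok p p_in; rewrite p2.
by case: a a_ok => // c; apply: A_mono; rewrite leq_add2l js_ge.
Qed.

Section Expansion.
Variables (s t : nat -> seq (option T)) (m : nat -> nat) (L : nat).
Hypotheses (m0 : m 0 = 0) (m_lt : forall i, i <= L -> m i < m i.+1).
Hypothesis t_span : forall i, i <= L ->
  vspan s (fun n => A (k + n)) (fun n => m i <= n < m i.+1) (t i).

(* Each word of a span over t_0, ..., t_L is a word of a span over s: the
   pair (l, a) is replaced by the letters of t_l in s, filled with a. *)
Lemma vword_expand lo hi ls :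
  hi <= L.+1 -> sorted ltn (map fst ls) -> all (fun p => lo <= p.1 < hi) ls ->
  letters_ok ls ->
  exists2 ls', vword s ls' = vword t ls &
    [/\ sorted ltn (map fst ls'), all (fun q => m lo <= q.1 < m hi) ls',
        letters_ok ls', (None \in map snd ls') = (None \in map snd ls)
      & size ls <= size ls'].
Proof.
move=> le_hi; elim: ls lo => [|[l a] ls IH] lo; first by exists [::].
rewrite /= (path_sortedE ltn_trans) => /andP[/allP l_lt ls_sort].
case/andP=> /andP[lo_l l_hi] ls_in /andP[a_ok ls_ok].
have ls_in' : all (fun p => l.+1 <= p.1 < hi) ls.
  by apply/allP => p p_in; rewrite (l_lt _ (map_f _ p_in)) (andP (allP ls_in p p_in)).2.
have [ls0 ls0_word [ls0_sort ls0_in ls0_ok ls0_None ls0_size]] :=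
  IH _ ls_sort ls_in' ls_ok.
have l_L : l <= L by rewrite -ltnS (leq_trans l_hi).
have [js [js_ne js_sort /allP js_in /andP[js_ok js_None] t_l]] := t_span l_L.
exists (fill a js ++ ls0).
  by rewrite vword_cat vword_fill ls0_word /vword -t_l.
split.
- rewrite map_cat fill_fst (sorted_pairwise ltn_trans) pairwise_cat.
  rewrite -!(sorted_pairwise ltn_trans) js_sort ls0_sort !andbT.
  apply/allrelP => x y /mapP[p /js_in /andP[_ p_lt] ->] /mapP[q /(allP ls0_in)].
  by case/andP=> q_ge _ ->; exact: leq_trans p_lt q_ge.
- rewrite all_cat; apply/andP; split.
    apply/allP => q /mapP[p /js_in /andP[p_ge p_lt] ->] /=.
    rewrite (leq_trans (block_mono m_lt lo_l (ltnW (leq_trans l_hi le_hi))) p_ge).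
    exact: leq_trans p_lt (block_mono m_lt l_hi le_hi).
  apply/allP => q /(allP ls0_in) /andP[q_ge ->]; rewrite andbT.
  exact: leq_trans (block_mono m_lt (leqW lo_l) (leq_trans l_hi le_hi)) q_ge.
- rewrite [letters_ok _]all_cat -/(letters_ok ls0) ls0_ok andbT.
  apply: (letters_ok_fill (l := l)) => //.
  apply/allP => p /js_in /andP[p_ge _].
  exact: leq_trans (block_ge m_lt m0 (leqW l_L)) p_ge.
- by rewrite map_cat mem_cat fill_None // ls0_None in_cons eq_sym.
- rewrite size_cat size_map /= -add1n leq_add // lt0n size_eq0; exact: js_ne.
Qed.

End Expansion.

(* <=_k is reflexive: take every block to be a singleton. *)
Lemma le_k_refl s : le_k A k s s.
Proof.
move=> l; exists id; split => // i _; exists [:: (i, None)].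
by split => //=; rewrite ?leqnn ?cats0 ?vsubst_None.
Qed.

(* <=_k is transitive: the blocks of t in w, expanded into s, form blocks of
   t in s. *)
Lemma le_k_trans t w s : le_k A k t w -> le_k A k w s -> le_k A k t s.
Proof.
move=> t_w w_s l.
have [m2 [m2_0 m2_lt t_span]] := t_w l.
have [m1 [m1_0 m1_lt w_span]] := w_s (m2 l.+1).
have m2_le i : i <= l.+1 -> m2 i <= m2 l.+1 by move/(block_mono m2_lt); apply.
exists (fun i => m1 (m2 i)); split => [|i le_il|i le_il]; first by rewrite m2_0 m1_0.
  apply: leq_trans (m1_lt _ (m2_le _ (leqW le_il))) _.
  apply: (block_mono m1_lt (m2_lt _ le_il)); exact: leqW (m2_le i.+1 le_il).
have [js [_ js_sort js_in /andP[js_ok js_None] t_i]] := t_span i le_il.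
have [ls' ls'_word [ls'_sort ls'_in ls'_ok ls'_None _]] :=
  vword_expand m1_0 m1_lt w_span (leqW (m2_le i.+1 le_il)) js_sort js_in js_ok.
exists ls'; split => //; last by rewrite t_i; exact: esym ls'_word.
  by move: ls'_None; rewrite js_None; case: (ls').
by apply/andP; split; last by rewrite ls'_None.
Qed.

(* Passing to t <=_k w shrinks constant spans: a constant word over t, with
   letters lifted to A ∪ {x}, expands into w without creating the variable. *)
Lemma cspan_le_k t w u : le_k A k t w ->
  cspan t (fun n => A (k + n)) (fun _ => true) u ->
  cspan w (fun n => A (k + n)) (fun _ => true) u.
Proof.
move=> t_w [cs [cs_ne cs_sort _ cs_ok ->]].
pose L := \max_(p <- cs) p.1.
have [m [m0 m_lt w_span]] := t_w L.
have cs_in : all (fun p => 0 <= p.1 < L.+1) (lift cs).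
  apply/allP => q /mapP[p p_in ->].
  by rewrite ltnS (leq_bigmax_seq (F := fst) p p_in).
have lift_sort : sorted ltn (map fst (lift cs)) by rewrite -map_comp.
have lift_ok : letters_ok (lift cs).
  by apply/allP => q /mapP[p p_in ->]; exact: (allP cs_ok).
have [ls' ls'_word [ls'_sort _ ls'_ok ls'_None ls'_size]] :=
  vword_expand m0 m_lt w_span (leqnn _) lift_sort cs_in lift_ok.
have [cs' def_ls'] : exists cs', ls' = lift cs'.
  by apply: liftP; rewrite ls'_None; apply/mapP => -[q /mapP[p _ ->]].
subst ls'; exists cs'; split => //.
- rewrite !size_map in ls'_size.
  by rewrite -size_eq0 -lt0n (leq_trans _ ls'_size) // lt0n size_eq0.
- by move: ls'_sort; rewrite -map_comp.
- by apply/allP.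
- by apply/allP => p p_in; have := allP ls'_ok _ (map_f _ p_in).
- by apply/(inj_map Some_inj); rewrite -!vword_lift ls'_word.
Qed.

Definition avoids (F : seq T -> Prop) w : Prop :=
  forall u, cspan w (fun n => A (k + n)) (fun _ => true) u -> ~ F u.

Lemma avoids_le_k F t w : le_k A k t w -> avoids F w -> avoids F t.
Proof. by move=> t_w F_w u /(cspan_le_k t_w); apply: F_w. Qed.

Lemma not_k_large F w : ~ k_large A k F w ->
  exists t, [/\ is_Vinf A t, le_k A k t w & avoids F t].
Proof.
move=> not_large; apply: NNPP => no_t; apply: not_large => t t_inf t_w.
apply: NNPP => no_u; apply: no_t; exists t; split => // u t_u F_u.
by apply: no_u; exists u.
Qed.

(* If none of F_1, ..., F_j is k-large in any extraction of s, then one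
   extraction of s avoids them all: refine successively for F_1, ..., F_j. *)
Lemma avoid_family (F : nat -> seq T -> Prop) s j : is_Vinf A s ->
  (forall i, 1 <= i <= j -> forall t, is_Vinf A t -> le_k A k t s ->
     ~ k_large A k (F i) t) ->
  exists w, [/\ is_Vinf A w, le_k A k w s & forall i, 1 <= i <= j -> avoids (F i) w].
Proof.
move=> s_inf; elim: j => [_|j IH not_large].
  by exists s; split => // [|i /andP[/leq_trans le /le]//]; exact: le_k_refl.
have [w [w_inf w_s avoid_w]] : exists w, [/\ is_Vinf A w, le_k A k w s &
    forall i, 1 <= i <= j -> avoids (F i) w].
  by apply: IH => i /andP[i_ge i_le]; apply: not_large; rewrite i_ge leqW.
have [w' [w'_inf w'_w avoid_w']] :=
  not_k_large (not_large j.+1 (leqnn j.+1) w w_inf w_s).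
exists w'; split => [//||i /andP[i_ge]]; first exact: le_k_trans w'_w w_s.
rewrite leq_eqVlt ltnS => /orP[/eqP -> //|i_le].
by apply: avoids_le_k w'_w _; apply: avoid_w; rewrite i_ge.
Qed.

End Refinement.

Theorem fact3p5 (T : eqType) (A : nat -> seq T)
    (hA_ne : forall n, A n != [::])
    (hA_inc : forall n, {subset A n <= A n.+1})
    (k : nat) (E : seq T -> Prop) (s : nat -> seq (option T))
    (hEW : forall w, E w -> is_word A w)
    (hs : is_Vinf A s)
    (hlarge : k_large A k E s)
    (r : nat) (hr : 2 <= r) (Es : nat -> seq T -> Prop)
    (hunion : forall w, E w <-> exists2 i, 1 <= i <= r & Es i w) :
  exists2 i, 1 <= i <= r &
    exists t, [/\ is_Vinf A t, le_k A k t s & k_large A k (Es i) t].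
Proof.
apply: NNPP => none_large.
have not_large i : 1 <= i <= r -> forall t, is_Vinf A t -> le_k A k t s ->
    ~ k_large A k (Es i) t.
  by move=> i_r t t_inf t_s large; apply: none_large; exists i => //; exists t.
have [w [w_inf w_s avoid_w]] := avoid_family hA_inc hs not_large.
have [u [E_u w_u]] := hlarge w w_inf w_s.
have [i i_r Es_u] := (hunion u).1 E_u.
exact: avoid_w i i_r u w_u Es_u.
Qed.
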